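(* Let $G=(V,E)$ be a graph on $n$ vertices $v_1,\dots,v_n$ and let $k$ be a positive integer. Let $v\in V$ be such that its neighbourhood $N(v)$ induces a clique of size at most $k-2$. For any choice of positive parameters $(p_1,\dots,p_n)$, the Glauber dynamics $\mathcal{L}_V$ for $k$-colourings of $G$ and the Glauber dynamics $\mathcal{L}_{V\setminus\{v\}}$ for $k$-colourings of $G-v$ (the subgraph induced by $V\setminus\{v\}$), defined with the same parameters, satisfy $\tau(\mathcal{L}_{V\setminus\{v\}})\leq\tau(\mathcal{L}_V)$.
   Context: The continuous-time Glauber dynamics for proper $k$-vertex-colourings of a graph with parameters $(p_i)$ is the chain on the set of proper colourings with rate $p_i$ from $\sigma$ to $\eta$ whenever $\sigma,\eta$ differ exactly at vertex $v_i$, and rate $0$ otherwise. The relaxation time is $\tau=1/\mathrm{Gap}$, where $\mathrm{Gap}$ is the second smallest eigenvalue of minus the generator. *)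

From HB Require Import structures.
From mathcomp Require Import all_boot all_order all_algebra.
From mathcomp Require Import reals constructive_ereal.
Set Implicit Arguments. Unset Strict Implicit. Unset Printing Implicit Defensive.
Import Order.TTheory GRing.Theory Num.Theory.
Local Open Scope ring_scope.

(* A graph on vertices 'I_n is a rel e (assumed symmetric, irreflexive).
   For S : {set 'I_n}, the induced subgraph G[S] has vertex type vsub S. *)
Definition vsub (n : nat) (S : {set 'I_n}) := {x : 'I_n | x \in S}.

Definition proper n (e : rel 'I_n) k (S : {set 'I_n}) (c : {ffun vsub S -> 'I_k}) : bool :=
  [forall x : vsub S, forall y : vsub S, e (val x) (val y) ==> (c x != c y)].

Definition colouring n (e : rel 'I_n) k (S : {set 'I_n}) :=
  {c : {ffun vsub S -> 'I_k} | proper e c}.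

Definition glauber_rate (R : realType) n (e : rel 'I_n) k (S : {set 'I_n})
  (p : 'I_n -> R) (s t : colouring e k S) : R :=
  \sum_(x : vsub S | [set y | val s y != val t y] == [set x]) p (val x).

(* minus the generator of the Glauber dynamics for k-colourings of G[S],
   states indexed by 'I_#|colouring e k S| via enum_val *)
Definition minus_gen (R : realType) n (e : rel 'I_n) k (S : {set 'I_n})
  (p : 'I_n -> R) : 'M[R]_#|{: colouring e k S}| :=
  \matrix_(i < #|{: colouring e k S}|, j < #|{: colouring e k S}|)
    if i == j then
      \sum_(t : colouring e k S) @glauber_rate R n e k S p (enum_val i) t
    else - @glauber_rate R n e k S p (enum_val i) (enum_val j).

(* g is the second smallest eigenvalue (counted with multiplicity) of A *)
Definition is_gap (R : realType) m (A : 'M[R]_m) (g : R) : Prop :=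
  exists s : seq R, [/\ sorted <=%R s, (1 < size s)%N,
    char_poly A = \prod_(x <- s) ('X - x%:P) & s`_1 = g].

Definition relax_time (R : realType) (g : R) : \bar R :=
  if 0 < g then (g^-1)%:E else +oo%E.

(* Restricting colourings of G to G - v maps the state space of L_V onto that
   of L_(V - v), and since N(v) is a clique every colouring of G - v has exactly
   m = k - |N(v)| > 0 extensions.  Pulling a function back along the restriction
   multiplies its squared norm by m and its Dirichlet form by at most m: from a
   colouring s, the only reachable colouring restricting to t' is the one that
   keeps the colour of v, and it is reached at the rate from the restriction of s
   to t'.  By the Courant-Fischer min-max principle, applied to the complexified
   generators (Hermitian because Glauber rates are symmetric), every eigenvalue of
   L_V is at most the eigenvalue of L_(V - v) of the same index; for the second
   one this is Gap(L_V) <= Gap(L_(V - v)). *)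

From Pilot Require Import Defs.
From HB Require Import structures.
From mathcomp Require Import all_boot all_order all_algebra.
From mathcomp Require Import reals constructive_ereal.
From mathcomp Require Import complex spectral sesquilinear zify ring.
Set Implicit Arguments. Unset Strict Implicit. Unset Printing Implicit Defensive.
Import Order.TTheory GRing.Theory Num.Theory.
Local Open Scope ring_scope.
Local Open Scope sesquilinear_scope.
Local Notation "''[' u ]" := (dotmx u u) : ring_scope.

Section SortedCount.
Variables (d : Order.disp_t) (T : porderType d) (s : seq T) (x0 : T).
Hypothesis s_sorted : sorted <=%O s.

Lemma sorted_count_le_nth i : (i < size s)%N ->
  (i.+1 <= count (fun x => x <= nth x0 s i)%O s)%N.
Proof.
move=> lt_is; set P := fun x => (x <= nth x0 s i)%O.
have take_le : count P (take i.+1 s) = i.+1.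
  rewrite -[RHS](size_takel lt_is); apply/eqP; rewrite -all_count.
  apply/allP => x /(nthP x0)[j]; rewrite size_takel // => lt_ji <-.
  by rewrite nth_take // /P (sorted_leq_nth le_trans lexx) ?inE // (leq_trans lt_ji).
by rewrite -[X in count _ X](cat_take_drop i.+1) count_cat take_le leq_addr.
Qed.

Lemma sorted_count_ge_nth i :
  (size s - i <= count (fun x => nth x0 s i <= x)%O s)%N.
Proof.
set P := fun x => (nth x0 s i <= x)%O.
have drop_ge : count P (drop i s) = (size s - i)%N.
  rewrite -size_drop; apply/eqP; rewrite -all_count.
  apply/allP => x /(nthP x0)[j]; rewrite size_drop => lt_j <-.
  rewrite nth_drop /P (sorted_leq_nth le_trans lexx) ?inE ?leq_addr //.
  - by rewrite -subn_gt0 (leq_ltn_trans (leq0n j)).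
  - by rewrite -ltn_subRL.
by rewrite -[X in count _ X](cat_take_drop i) count_cat drop_ge leq_addl.
Qed.

End SortedCount.

Lemma size_spectrum_char_poly (F : idomainType) n (M : 'M[F]_n) (s : seq F) :
  char_poly M = \prod_(x <- s) ('X - x%:P) -> size s = n.
Proof.
by move=> M_char; apply/eqP; rewrite -eqSS -(size_char_poly M) M_char size_prod_XsubC.
Qed.

Lemma char_poly_conj (R : comNzRingType) n (Q Q' D : 'M[R]_n) :
  Q *m Q' = 1%:M -> char_poly (Q *m D *m Q') = char_poly D.
Proof.
move=> QQ'; rewrite /char_poly /char_poly_mx.
have QQ'p : map_mx polyC Q *m map_mx polyC Q' = 1%:M.
  by rewrite -map_mxM QQ' map_scalar_mx.
have -> : 'X%:M - map_mx polyC (Q *m D *m Q') =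
    map_mx polyC Q *m ('X%:M - map_mx polyC D) *m map_mx polyC Q'.
  rewrite mulmxBr mulmxBl !map_mxM; congr (_ - _).
  by rewrite scalar_mxC -mulmxA QQ'p mulmx1.
have detQQ' : \det (map_mx polyC Q) * \det (map_mx polyC Q') = 1.
  by rewrite -det_mulmx QQ'p det1.
by rewrite !det_mulmx mulrAC detQQ' mul1r.
Qed.

Lemma mul_rowsub1_eq0 (R : pzSemiRingType) m n (f : 'I_m -> 'I_n)
    (c : 'rV[R]_m) l :
  (forall a, f a != l) -> (c *m rowsub f 1%:M) 0 l = 0.
Proof.
move=> fl; rewrite !mxE big1 // => a _.
by rewrite !mxE (negPf (fl a)) mulr0.
Qed.

Definition quadmx (C : numClosedFieldType) n (A : 'M[C]_n) (u : 'rV_n) : C :=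
  dotmx (u *m A) u.

Lemma dnormmxE (C : numClosedFieldType) n (u : 'rV[C]_n) :
  '[u] = \sum_l u 0 l * (u 0 l)^*.
Proof. by rewrite dotmxE mxE; apply: eq_bigr => l _; rewrite !mxE. Qed.

Section CourantFischer.
Variables (C : numClosedFieldType) (N : nat) (A : 'M[C]_N).
Hypothesis A_herm : A \is hermsymmx.
Local Notation P := (spectralmx A).
Local Notation d := (spectral_diag A).

Let P_unitary : P *m P^t* = 1%:M.
Proof. exact/unitarymxP/spectral_unitarymx. Qed.

Lemma hermsymmx_spectral : A = P^t* *m diag_mx d *m P.
Proof.
have /orthomx_spectralP := hermitian_normalmx A_herm.
by rewrite invmx_unitary ?spectral_unitarymx.
Qed.

Lemma char_poly_spectral : char_poly A = \prod_(l < N) ('X - (d 0 l)%:P).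
Proof.
rewrite {1}hermsymmx_spectral char_poly_conj; last first.
  by rewrite -invmx_unitary ?spectral_unitarymx // mulVmx // spectral_unit.
rewrite char_poly_trig ?diag_mx_is_trig //.
by apply: eq_bigr => l _; rewrite mxE eqxx mulr1n.
Qed.

Lemma dnorm_spectral (x : 'rV_N) : '[x *m P] = '[x].
Proof.
by rewrite !dotmxE trmx_mul map_mxM mulmxA -(mulmxA x P) P_unitary mulmx1.
Qed.

Lemma quadmx_spectral (x : 'rV_N) :
  quadmx A (x *m P) = \sum_l d 0 l * (x 0 l * (x 0 l)^*).
Proof.
rewrite /quadmx dotmxE [X in x *m P *m X]hermsymmx_spectral trmx_mul map_mxM.
rewrite !mulmxA -(mulmxA x P) P_unitary mulmx1.
rewrite -(mulmxA (x *m diag_mx d) P) P_unitary mulmx1 !mxE.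
apply: eq_bigr => l _; rewrite !mxE (bigD1 l) //= big1 => [|j /negPf nj]; last first.
  by rewrite !mxE nj mulr0n mulr0.
by rewrite !mxE eqxx mulr1n addr0 (mulrC (x 0 l)) -mulrA.
Qed.

Lemma quadmx_le_spectral (x : 'rV_N) b : (forall l, x 0 l != 0 -> d 0 l <= b) ->
  quadmx A (x *m P) <= b * '[x *m P].
Proof.
move=> xb; rewrite quadmx_spectral dnorm_spectral dnormmxE mulr_sumr.
apply: ler_sum => l _; have [-> | /xb dlb] := eqVneq (x 0 l) 0.
  by rewrite mul0r !mulr0.
by rewrite ler_wpM2r // mul_conjC_ge0.
Qed.

Lemma quadmx_ge_spectral (x : 'rV_N) b : (forall l, x 0 l != 0 -> b <= d 0 l) ->
  b * '[x *m P] <= quadmx A (x *m P).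
Proof.
move=> xb; rewrite quadmx_spectral dnorm_spectral dnormmxE mulr_sumr.
apply: ler_sum => l _; have [-> | /xb dlb] := eqVneq (x 0 l) 0.
  by rewrite mul0r !mulr0.
by rewrite ler_wpM2r // mul_conjC_ge0.
Qed.

Definition spectral_rows (Q : pred C) : 'M[C]_(#|[pred l | Q (d 0 l)]|, N) :=
  rowsub enum_val P.

Lemma rank_spectral_rows Q : \rank (spectral_rows Q) = #|[pred l | Q (d 0 l)]|.
Proof.
apply: mxrank_unitary; apply/row_unitarymxP => a b.
rewrite !row_rowsub; have /row_unitarymxP -> := spectral_unitarymx A.
by rewrite (inj_eq enum_val_inj).
Qed.

Lemma spectral_rows_coord Q (c : 'rV_#|[pred l | Q (d 0 l)]|) l :
  (c *m rowsub enum_val (1%:M : 'M[C]_N)) 0 l != 0 -> Q (d 0 l).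
Proof.
apply: contraNT => Qdl; rewrite mul_rowsub1_eq0 ?eqxx // => a.
by apply: contra Qdl => /eqP <-; have := enum_valP a; rewrite inE.
Qed.

Variable s : seq C.
Hypotheses (s_char : char_poly A = \prod_(x <- s) ('X - x%:P))
  (s_sorted : sorted <=%R s).

Lemma perm_spectrum : perm_eq s [seq d 0 l | l <- index_enum 'I_N].
Proof. by apply: prod_XsubC_eq; rewrite -s_char char_poly_spectral big_map. Qed.

Lemma count_spectrum (Q : pred C) : count Q s = #|[pred l | Q (d 0 l)]|.
Proof. by rewrite (permP perm_spectrum) count_map cardE /enum_mem size_filter. Qed.

(* The two halves of the min-max characterisation of the i-th eigenvalue. *)
Lemma exists_subspace_quadmx_le i : (i < N)%N -> exists m (W : 'M_(m, N)),
  (i < \rank W)%N /\ forall c, quadmx A (c *m W) <= s`_i * '[c *m W].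
Proof.
move=> lt_iN; exists _, (spectral_rows (<= s`_i)); split.
  rewrite rank_spectral_rows -count_spectrum.
  by apply: sorted_count_le_nth; rewrite ?(size_spectrum_char_poly s_char).
move=> c; rewrite /spectral_rows rowsubE mulmxA.
by apply: quadmx_le_spectral => l; apply: (spectral_rows_coord (Q := (<= s`_i))).
Qed.

Lemma subspace_exists_quadmx_ge i m (W : 'M_(m, N)) : (i < \rank W)%N ->
  exists y, [/\ y != 0, (y <= W)%MS & s`_i * '[y] <= quadmx A y].
Proof.
move=> lt_iW; set H := spectral_rows (>= s`_i).
have rank_H : (N - i <= \rank H)%N.
  rewrite rank_spectral_rows -count_spectrum -{1}(size_spectrum_char_poly s_char).
  exact: sorted_count_ge_nth.
(* rank W + rank H > N, so W and H intersect nontrivially *)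
have /rowV0Pn[y sub_y y_neq0] : (W :&: H)%MS != 0.
  rewrite -mxrank_eq0 -lt0n.
  have := mxrank_sum_cap W H; have := rank_leq_col (W + H)%MS; lia.
exists y; split => //; first exact: submx_trans sub_y (capmxSl _ _).
have /submxP[c ->] := submx_trans sub_y (capmxSr _ _).
rewrite /H /spectral_rows rowsubE mulmxA.
by apply: quadmx_ge_spectral => l; apply: (spectral_rows_coord (Q := (>= s`_i))).
Qed.

End CourantFischer.

Lemma spectrum_le_of_embedding (C : numClosedFieldType) Na Nb
    (A : 'M[C]_Na) (B : 'M[C]_Nb) (sa sb : seq C) (L : 'M[C]_(Nb, Na)) (m : C) i :
  A \is hermsymmx -> char_poly A = \prod_(x <- sa) ('X - x%:P) -> sorted <=%R sa ->
  B \is hermsymmx -> char_poly B = \prod_(x <- sb) ('X - x%:P) -> sorted <=%R sb ->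
  0 < m -> (forall f, '[f *m L] = m * '[f]) ->
  (forall f, quadmx A (f *m L) <= m * quadmx B f) ->
  (i < Nb)%N -> sa`_i <= sb`_i.
Proof.
move=> A_herm sa_char sa_sorted B_herm sb_char sb_sorted m_gt0 L_dnorm L_quad lt_iNb.
have [mW [W [rank_W W_le]]] := exists_subspace_quadmx_le B_herm sb_char sb_sorted lt_iNb.
have L_free : row_free L.
  apply: inj_row_free => f fL0; apply/eqP.
  have : m * '[f] == 0 by rewrite -L_dnorm fL0 dnorm_eq0.
  by rewrite mulf_eq0 (gt_eqF m_gt0) dnorm_eq0.
have [|y [y_neq0 /submxP[c y_def] y_ge]] :=
  subspace_exists_quadmx_ge A_herm sa_char sa_sorted (W := W *m L) (i := i).
  by rewrite mxrankMfree.
move: y_neq0 y_ge; rewrite y_def mulmxA; set f := c *m W => fL_neq0 fL_ge.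
have f_gt0 : 0 < '[f].
  by rewrite dnorm_gt0; apply: contraNneq fL_neq0 => ->; rewrite mul0mx.
have := le_trans fL_ge (le_trans (L_quad f) (ler_wpM2l (ltW m_gt0) (W_le c))).
by rewrite L_dnorm (mulrCA sa`_i) ler_pM2l // ler_pM2r.
Qed.

(* [minus_gen e k S p] is [laplacian (glauber_rate p)] up to conversion. *)
Definition laplacian (R : pzRingType) (T : finType) (r : T -> T -> R) : 'M[R]_#|T| :=
  \matrix_(i, j) if i == j then \sum_t r (enum_val i) t
                 else - r (enum_val i) (enum_val j).

Lemma map_laplacian (R S : pzRingType) (phi : {rmorphism R -> S}) (T : finType)
    (r : T -> T -> R) :
  map_mx phi (laplacian r) = laplacian (fun x y => phi (r x y)).
Proof.
by apply/matrixP => i j; rewrite !mxE; case: eqP => _; rewrite ?rmorph_sum ?rmorphN.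
Qed.

Lemma sum_enum_rank (V : nmodType) (T : finType) (F : 'I_#|T| -> V) :
  \sum_i F i = \sum_x F (enum_rank x).
Proof. by rewrite (reindex enum_rank) //; apply/onW_bij/enum_rank_bij. Qed.

Section Laplacian.
Variables (C : numClosedFieldType) (T : finType) (r : T -> T -> C).
Hypotheses (r_sym : forall x y, r x y = r y x) (r_diag : forall x, r x x = 0).

Lemma laplacian_hermsymmx : (forall x y, r x y \is Num.real) ->
  laplacian r \is hermsymmx.
Proof.
move=> r_real; apply: realsym_hermsym; last first.
  apply/mxOverP => i j; rewrite mxE; case: eqP => _.
    by apply: rpred_sum => t _; apply: r_real.
  by rewrite rpredN r_real.
apply/is_hermitianmxP; rewrite expr0 scale1r; apply/matrixP => i j.
by rewrite !mxE [j == i]eq_sym; case: eqP => [->|_] //; rewrite r_sym.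
Qed.

Variable g : 'rV[C]_#|T|.
Local Notation G x := (g 0 (enum_rank x)).

Lemma quadmx_laplacian :
  quadmx (laplacian r) g = \sum_x \sum_y r x y * ((G x - G y) * (G x)^*).
Proof.
rewrite /quadmx dotmxE mxE sum_enum_rank; apply: eq_bigr => x _.
rewrite !mxE sum_enum_rank (bigD1 x) //= [in RHS](bigD1 x) //= r_diag mul0r add0r.
rewrite !mxE !enum_rankK eqxx [\sum_t r x t](bigD1 x) //= r_diag add0r.
rewrite mulr_sumr -big_split mulr_suml; apply: eq_bigr => y yx /=.
rewrite !mxE !enum_rankK (inj_eq enum_rank_inj) (negPf yx) r_sym; ring.
Qed.

Lemma dirichlet_laplacian :
  2 * quadmx (laplacian r) g = \sum_x \sum_y r x y * `|G x - G y| ^+ 2.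
Proof.
rewrite mulr_natl mulr2n quadmx_laplacian [in X in _ + X]exchange_big /=.
rewrite -big_split; apply: eq_bigr => x _; rewrite -big_split; apply: eq_bigr => y _.
by rewrite /= r_sym normCK rmorphB; ring.
Qed.

End Laplacian.

Definition lift_mx (R : pzSemiRingType) (T T' : finType) (pi : T -> T') :
  'M[R]_(#|T'|, #|T|) := \matrix_(i, j) (pi (enum_val j) == enum_val i)%:R.

Section Lift.
Variables (C : numClosedFieldType) (T T' : finType) (pi : T -> T') (m : nat).
Hypothesis card_fibre : forall t', #|[pred t | pi t == t']| = m.
Local Notation L := (lift_mx C pi).

Lemma lift_mx_coord (f : 'rV[C]_#|T'|) x :
  (f *m L) 0 (enum_rank x) = f 0 (enum_rank (pi x)).
Proof.
rewrite !mxE (bigD1 (enum_rank (pi x))) //= big1 ?addr0.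
  by rewrite !mxE !enum_rankK eqxx mulr1.
move=> i i_neq; rewrite !mxE enum_rankK; case: eqP => [pix|_]; last by rewrite mulr0.
by case/eqP: i_neq; rewrite pix enum_valK.
Qed.

Lemma sum_fibres (F : T' -> C) : \sum_x F (pi x) = m%:R * \sum_y F y.
Proof.
rewrite (partition_big pi predT) //= mulr_sumr; apply: eq_bigr => y _.
rewrite (eq_bigr (fun _ => F y)); last by move=> x /eqP ->.
by rewrite sumr_const -(card_fibre y) mulr_natl.
Qed.

Lemma dnorm_lift (f : 'rV[C]_#|T'|) : '[f *m L] = m%:R * '[f].
Proof.
rewrite !dnormmxE !sum_enum_rank.
under eq_bigr do rewrite lift_mx_coord.
exact: (sum_fibres (fun y => f 0 (enum_rank y) * (f 0 (enum_rank y))^*)).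
Qed.

Variables (r : T -> T -> C) (r' : T' -> T' -> C).
Hypotheses (r_sym : forall x y, r x y = r y x) (r_diag : forall x, r x x = 0).
Hypotheses (r'_sym : forall x y, r' x y = r' y x) (r'_diag : forall x, r' x x = 0).
Hypothesis (r_lift : forall s t',
  pi s != t' -> \sum_(t | pi t == t') r s t <= r' (pi s) t').

Lemma quadmx_lift (f : 'rV[C]_#|T'|) :
  quadmx (laplacian r) (f *m L) <= m%:R * quadmx (laplacian r') f.
Proof.
rewrite -(ler_pM2l (ltr0Sn _ 1)) mulrCA !dirichlet_laplacian //.
under eq_bigr do under eq_bigr do rewrite !lift_mx_coord.
set F := fun y => f 0 (enum_rank y).
pose E x' := \sum_y' r' x' y' * `|F x' - F y'| ^+ 2.
rewrite -(sum_fibres E) ler_sum // => x _.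
rewrite (partition_big pi predT) //= /E ler_sum // => y' _.
rewrite (eq_bigr (fun y => `|F (pi x) - F y'| ^+ 2 * r x y)); last first.
  by move=> y /eqP ->; rewrite mulrC.
rewrite -mulr_sumr mulrC.
have [->|ne] := eqVneq (pi x) y'; first by rewrite subrr normr0 expr0n !mulr0.
by rewrite ler_wpM2r ?exprn_ge0 ?r_lift.
Qed.

End Lift.

Lemma nth_map_raddf (U V : nmodType) (f : {additive U -> V}) (s : seq U) i :
  (map f s)`_i = f s`_i.
Proof.
have [lt_is|le_si] := ltnP i (size s); first exact: nth_map.
by rewrite !nth_default ?size_map ?raddf0.
Qed.

Lemma char_poly_map_spectrum (F K : nzRingType) (phi : {rmorphism F -> K}) n
    (M : 'M[F]_n) (s : seq F) :
  char_poly M = \prod_(x <- s) ('X - x%:P) ->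
  char_poly (map_mx phi M) = \prod_(x <- map phi s) ('X - x%:P).
Proof. by move=> M_char; rewrite prod_map_poly -M_char map_char_poly. Qed.

Theorem laplacian_spectrum_le_of_lift (R : realType) (T T' : finType)
    (pi : T -> T') (m : nat) (r : T -> T -> R) (r' : T' -> T' -> R)
    (sa sb : seq R) i :
  (forall x y, r x y = r y x) -> (forall x, r x x = 0) ->
  (forall x y, r' x y = r' y x) -> (forall x, r' x x = 0) ->
  (forall s t', pi s != t' -> \sum_(t | pi t == t') r s t <= r' (pi s) t') ->
  (0 < m)%N -> (forall t', #|[pred t | pi t == t']| = m) ->
  char_poly (laplacian r) = \prod_(x <- sa) ('X - x%:P) -> sorted <=%R sa ->
  char_poly (laplacian r') = \prod_(x <- sb) ('X - x%:P) -> sorted <=%R sb ->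
  (i < #|T'|)%N -> sa`_i <= sb`_i.
Proof.
move=> r_sym r_diag r'_sym r'_diag r_lift m_gt0 card_fibre.
move=> sa_char sa_sorted sb_char sb_sorted lt_iT'.
pose phi := real_complex R.
have phi_real x : phi x \is Num.real by apply/complex_realP; exists x.
have phi_homo : {homo phi : x y / x <= y} by move=> x y; rewrite lecR.
rewrite -lecR -!(nth_map_raddf phi).
apply: (spectrum_le_of_embedding (A := map_mx phi (laplacian r))
  (B := map_mx phi (laplacian r')) (L := lift_mx _ pi) (m := m%:R)) lt_iT'.
- by rewrite map_laplacian; apply: laplacian_hermsymmx => // x y; rewrite r_sym.
- exact: char_poly_map_spectrum.
- exact: (homo_sorted phi_homo) sa_sorted.
- by rewrite map_laplacian; apply: laplacian_hermsymmx => // x y; rewrite r'_sym.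
- exact: char_poly_map_spectrum.
- exact: (homo_sorted phi_homo) sb_sorted.
- by rewrite ltr0n.
- exact: dnorm_lift.
move=> f; rewrite !map_laplacian.
apply: quadmx_lift => // [x y|x|x y|x|s t' /r_lift].
- by rewrite r_sym.
- by rewrite r_diag rmorph0.
- by rewrite r'_sym.
- by rewrite r'_diag rmorph0.
- by rewrite -rmorph_sum lecR.
Qed.

Lemma sum_cond_eq_set1 (V : nmodType) (I : finType) (D : {set I}) (F : I -> V) :
  \sum_(x | D == [set x]) F x = if #|D| == 1%N then \sum_(x in D) F x else 0.
Proof.
have [/eqP/cards1P[x0 ->]|D_neq1] := eqVneq #|D| 1%N.
  by rewrite big_set1 (big_pred1 x0) // => x; rewrite /= (inj_eq set1_inj) eq_sym.
apply: big_pred0 => x; apply/negbTE; apply: contra D_neq1 => /eqP->.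
by rewrite cards1.
Qed.

Section GlauberRates.
Variables (R : realType) (n k : nat) (e : rel 'I_n) (S : {set 'I_n}).
Variable p : 'I_n -> R.

Definition disagree (s t : colouring e k S) := [set x | val s x != val t x].

Lemma glauber_rateE (s t : colouring e k S) : glauber_rate p s t =
  if #|disagree s t| == 1%N then \sum_(x in disagree s t) p (val x) else 0.
Proof. exact: sum_cond_eq_set1. Qed.

Lemma glauber_rate_sym (s t : colouring e k S) :
  glauber_rate p s t = glauber_rate p t s.
Proof.
rewrite !glauber_rateE; suff -> : disagree s t = disagree t s by [].
by apply/setP => x; rewrite !inE eq_sym.
Qed.

Lemma disagree_eq0 (s t : colouring e k S) : (disagree s t == set0) = (s == t).
Proof.
apply/eqP/eqP => [st|->]; last by apply/setP => x; rewrite !inE eqxx.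
apply/val_inj/ffunP => x; apply/eqP.
by have /setP/(_ x) := st; rewrite !inE => /negbFE.
Qed.

Lemma glauber_rate_self (s : colouring e k S) : glauber_rate p s s = 0.
Proof.
have /eqP D0 : disagree s s == set0 by rewrite disagree_eq0.
by rewrite glauber_rateE D0 cards0.
Qed.

Lemma glauber_rate_ge0 (s t : colouring e k S) :
  (forall i, 0 <= p i) -> 0 <= glauber_rate p s t.
Proof. by move=> p_ge0; rewrite glauber_rateE; case: ifP; rewrite ?sumr_ge0. Qed.

End GlauberRates.

Section VertexDeletion.
Variables (n k : nat) (e : rel 'I_n) (v : 'I_n).
Hypotheses (e_sym : symmetric e) (e_irr : irreflexive e).
Local Notation V := [set: 'I_n].
Local Notation V' := [set~ v].

Definition vsubT (x : 'I_n) : vsub V := exist _ x (in_setT x).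

Definition vsub_incl (y : vsub V') : vsub V := vsubT (val y).

Lemma vsub_incl_inj : injective vsub_incl.
Proof. by move=> y z [] /val_inj. Qed.

Variant vsubT_spec (x : vsub V) : Prop :=
  | VsubT_v of x = vsubT v
  | VsubT_rest (y : vsub V') of x = vsub_incl y.

Lemma vsubTP x : vsubT_spec x.
Proof.
have [xv|xv] := eqVneq (val x) v; first by apply: VsubT_v; apply: val_inj.
have xV' : val x \in V' by rewrite !inE.
by apply: (VsubT_rest (y := exist _ (val x) xV')); apply: val_inj.
Qed.

Definition restrictv (c : {ffun vsub V -> 'I_k}) : {ffun vsub V' -> 'I_k} :=
  [ffun y => c (vsub_incl y)].

Definition extendv (c : {ffun vsub V' -> 'I_k}) (a : 'I_k) : {ffun vsub V -> 'I_k} :=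
  [ffun x => if insub (val x) is Some y then c y else a].

Lemma extendv_v c a : extendv c a (vsubT v) = a.
Proof. by rewrite ffunE insubN // !inE negbK. Qed.

Lemma extendv_rest c a (y : vsub V') : extendv c a (vsub_incl y) = c y.
Proof. by rewrite ffunE valK. Qed.

Lemma restrictv_extendv c a : restrictv (extendv c a) = c.
Proof. by apply/ffunP => y; rewrite ffunE extendv_rest. Qed.

Lemma restrictv_inj c d :
  restrictv c = restrictv d -> c (vsubT v) = d (vsubT v) -> c = d.
Proof.
move=> /ffunP cd cd_v; apply/ffunP => x.
case: (vsubTP x) => [|y] ->; first exact: cd_v.
by have := cd y; rewrite !ffunE.
Qed.

Lemma restrictv_proper c : Defs.proper e c -> Defs.proper e (restrictv c).
Proof.
move=> /forallP c_proper; apply/forallP => x; apply/forallP => y; rewrite !ffunE.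
exact: (forallP (c_proper (vsub_incl x)) (vsub_incl y)).
Qed.

Lemma extendv_proper c a : Defs.proper e c ->
  (forall y : vsub V', e v (val y) -> c y != a) -> Defs.proper e (extendv c a).
Proof.
move=> /forallP c_proper a_free; apply/forallP => x; apply/forallP => y.
apply/implyP; case: (vsubTP x) => [|x'] ->; case: (vsubTP y) => [|y'] -> /=.
- by rewrite e_irr.
- by rewrite extendv_v extendv_rest eq_sym; apply: a_free.
- by rewrite extendv_v extendv_rest e_sym; apply: a_free.
- by rewrite !extendv_rest; apply/implyP/(forallP (c_proper x')).
Qed.

Definition restrict_colouring (s : colouring e k V) : colouring e k V' :=
  exist _ (restrictv (val s)) (restrictv_proper (valP s)).

Local Notation rc := restrict_colouring.

Definition colour_v (s : colouring e k V) : 'I_k := val s (vsubT v).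
Local Notation Nv' := [set y : vsub V' | e v (val y)].

Lemma colouring_restrict_inj (s t : colouring e k V) :
  rc s = rc t -> colour_v s = colour_v t -> s = t.
Proof. by move=> /(congr1 val) st st_v; apply/val_inj/restrictv_inj. Qed.

Lemma card_neighbours' : #|Nv'| = #|[set x | e v x]|.
Proof.
rewrite -(card_imset _ val_inj); apply: eq_card => x; rewrite inE.
apply/imsetP/idP => [[y]|vx]; first by rewrite inE => ? ->.
have xV' : x \in V' by rewrite !inE; apply: contraTneq vx => ->; rewrite e_irr.
by exists (exist _ x xV'); rewrite ?inE.
Qed.

Hypothesis Nv_clique : forall x y, e v x -> e v y -> x != y -> e x y.

Lemma card_neighbour_colours (s' : colouring e k V') :
  #|[set val s' y | y in Nv']| = #|[set x | e v x]|.
Proof.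
rewrite card_in_imset ?card_neighbours' // => y z; rewrite !inE => vy vz yz.
apply/val_inj/eqP/negPn/negP => y_neq_z.
by have := forallP (forallP (valP s') y) z; rewrite Nv_clique // yz eqxx.
Qed.

Lemma fibre_colours (s' : colouring e k V') :
  [set colour_v s | s in [pred s : colouring e k V | rc s == s']] =
  ~: [set val s' y | y in Nv'].
Proof.
apply/setP => a; rewrite inE; apply/imsetP/idP => [[s /eqP <- ->]|a_free].
  apply/imsetP => -[y]; rewrite inE /= ffunE => vy /eqP; apply/negP.
  by have /forallP/(_ (vsub_incl y)) := forallP (valP s) (vsubT v); rewrite vy.
have c_proper : Defs.proper e (extendv (val s') a).
  apply: extendv_proper (valP s') _ => y vy; apply: contra a_free => /eqP <-.
  by apply/imsetP; exists y; rewrite ?inE.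
exists (exist _ (extendv (val s') a) c_proper); last by rewrite /colour_v /= extendv_v.
by rewrite inE; apply/eqP/val_inj; rewrite /= restrictv_extendv.
Qed.

Lemma card_fibre (s' : colouring e k V') :
  #|[pred s : colouring e k V | rc s == s']| = (k - #|[set x | e v x]|)%N.
Proof.
have colour_inj : {in [pred s : colouring e k V | rc s == s'] &, injective colour_v}.
  by move=> s t /eqP st /eqP ts; apply: colouring_restrict_inj; rewrite st ts.
rewrite -(card_in_imset colour_inj) fibre_colours cardsCs setCK card_ord.
by rewrite card_neighbour_colours.
Qed.

Lemma vsubT_v_notin_incl (D : {set vsub V'}) : vsubT v \notin vsub_incl @: D.
Proof.
apply/imsetP => -[y _ /(congr1 val) /= vy]; have := valP y.
by rewrite !inE => /eqP[]; apply/esym.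
Qed.

Lemma disagree_restrict (s t : colouring e k V) :
  disagree s t = (if colour_v s == colour_v t then set0 else [set vsubT v])
                 :|: [set vsub_incl y | y in disagree (rc s) (rc t)].
Proof.
apply/setP => x; rewrite !inE; case: (vsubTP x) => [|y] ->.
  rewrite (negPf (vsubT_v_notin_incl _)).
  by rewrite orbF /colour_v; case: eqP; rewrite ?inE ?eqxx.
have yv : vsub_incl y != vsubT v.
  by rewrite -(inj_eq val_inj); have := valP y; rewrite !inE.
rewrite (mem_imset _ _ vsub_incl_inj) !inE /= !ffunE.
by case: ifP; rewrite ?inE ?(negPf yv).
Qed.

Variables (R : realType) (p : 'I_n -> R).

Lemma glauber_rate_restrict (s t : colouring e k V) :
  colour_v s = colour_v t -> glauber_rate p s t = glauber_rate p (rc s) (rc t).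
Proof.
move=> /eqP st_v; rewrite !glauber_rateE disagree_restrict st_v set0U.
by rewrite (card_imset _ vsub_incl_inj) (big_imset _ (in2W vsub_incl_inj)).
Qed.

Lemma glauber_rate_recolour_v_rest (s t : colouring e k V) :
  colour_v s != colour_v t -> rc s != rc t -> glauber_rate p s t = 0.
Proof.
move=> /negPf st_v /negbTE; rewrite -disagree_eq0 => /negbT D_neq0.
rewrite glauber_rateE disagree_restrict st_v cardsU1 vsubT_v_notin_incl.
by rewrite (card_imset _ vsub_incl_inj) add1n eqSS cards_eq0 (negPf D_neq0).
Qed.

Hypothesis p_ge0 : forall i, 0 <= p i.

Lemma glauber_rate_lift (s : colouring e k V) (t' : colouring e k V') :
  rc s != t' -> \sum_(t | rc t == t') glauber_rate p s t <= glauber_rate p (rc s) t'.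
Proof.
move=> st'; rewrite (bigID (fun t => colour_v t == colour_v s)) /=.
rewrite [X in _ + X]big1 ?addr0 => [|t /andP[/eqP rt ts]]; last first.
  by apply: glauber_rate_recolour_v_rest; [rewrite eq_sym | rewrite rt].
rewrite (eq_bigr (fun=> glauber_rate p (rc s) t')); last first.
  by move=> t /andP[/eqP <- /eqP ts]; rewrite glauber_rate_restrict.
rewrite sumr_const -[leRHS]mulr1n ler_wpMn2l ?glauber_rate_ge0 //.
apply/card_le1_eqP => t u /andP[/eqP rt /eqP ts] /andP[/eqP ru /eqP us].
by apply: colouring_restrict_inj; rewrite ?rt ?ru ?ts ?us.
Qed.

End VertexDeletion.

Lemma relax_time_le (R : realType) (g g' : R) :
  g <= g' -> (relax_time g' <= relax_time g)%E.
Proof.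
move=> le_gg'; rewrite /relax_time.
have [g_gt0|_] := boolP (0 < g); last by rewrite leey.
by rewrite (lt_le_trans g_gt0 le_gg') lee_fin lef_pV2 ?posrE // (lt_le_trans g_gt0).
Qed.

Theorem proposition9 (R : realType) (n k : nat) (e : rel 'I_n)
  (e_sym : symmetric e) (e_irr : irreflexive e) (v : 'I_n)
  (p : 'I_n -> R) (p_pos : forall i, 0 < p i) (k_pos : (0 < k)%N)
  (Nv_clique : forall x y, e v x -> e v y -> x != y -> e x y)
  (Nv_size : (#|[set x | e v x]| + 2 <= k)%N)
  (gV gVv : R) :
  is_gap (minus_gen e k setT p) gV ->
  is_gap (minus_gen e k [set~ v] p) gVv ->
  (relax_time gVv <= relax_time gV)%E.
Proof.
move=> [sa [sa_sorted _ sa_char <-]] [sb [sb_sorted sb_size sb_char <-]].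
have two_colourings : (1 < #|{: colouring e k [set~ v]}|)%N.
  by rewrite -(size_spectrum_char_poly sb_char).
apply: relax_time_le.
apply: (laplacian_spectrum_le_of_lift (pi := restrict_colouring v)
  (m := k - #|[set x | e v x]|)) sa_char sa_sorted sb_char sb_sorted two_colourings.
- exact: glauber_rate_sym.
- exact: glauber_rate_self.
- exact: glauber_rate_sym.
- exact: glauber_rate_self.
- by move=> s t'; apply: glauber_rate_lift => i; apply: ltW.
- lia. (* only k - |N(v)| > 0 is needed *)
- exact: card_fibre.
Qed.
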